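(* Let $d\geq1$, let $\mathcal{D}$ be a dyadic lattice in $\mathbb{R}^d$, and fix $j\in\{1,\dots,3^d\}$. Suppose $f,g,h$ are bounded compactly supported functions supported in a cube $\tilde{Q}\in\mathcal{D}$. Then, if $Q_0\in\mathcal{D}$ is a sufficiently large ancestor of $\tilde{Q}$, \[ \langle \mathcal{A}_{*,Q'}^j(f,g),h\rangle=0\quad\text{for all } Q'\in\mathcal{D} \text{ with } Q_0\subset Q'. \]
   Context: $d\sigma$ is the normalized surface measure on $S^{2d-1}\subset\mathbb{R}^d\times\mathbb{R}^d$ and $\mathcal{A}_t(f,g)(x)=\int_{S^{2d-1}} f(x-ty)g(x-tz)\,d\sigma(y,z)$. A dyadic lattice $\mathcal{D}$ is a collection of cubes with sidelengths $2^m$, $m\in\mathbb{Z}$, such that the cubes of each fixed sidelength partition $\mathbb{R}^d$ and each cube of sidelength $2^m$ is the union of $2^d$ cubes of $\mathcal{D}$ of sidelength $2^{m-1}$. For $Q\in\mathcal{D}$ with $\ell(Q)=2^m$, $\frac13Q$ is the concentric cube of sidelength $\ell(Q)/3$, and $(\frac13Q)(1),\dots,(\frac13Q)(3^d)$ is a fixed enumeration (by relative position) of the $3^d$ cubes of sidelength $\ell(Q)/3$ partitioning $Q$ into a $3\times\cdots\times3$ grid. Define $\mathcal{A}^j_{*,Q}(f,g)(x)=\sup_{t\in[2^{m-4},2^{m-3}]}\mathcal{A}_t(f\chi_{\frac13Q},g\chi_{(\frac13Q)(j)})(x)$. $\langle\cdot,\cdot\rangle$ is the $L^2$ pairing. 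*)

From HB Require Import structures.
From mathcomp Require Import all_boot all_order all_algebra.
From mathcomp Require Import all_classical all_reals all_analysis.
Set Implicit Arguments. Unset Strict Implicit. Unset Printing Implicit Defensive.
Import Order.TTheory GRing.Theory Num.Theory.
Local Open Scope classical_set_scope.
Local Open Scope ring_scope.

Section Defs.
Variable R : realType.

(** Points of R^n are row vectors 'rV[R]_n; coordinate i of x is x 0 i. *)

Definition enorm (n : nat) (u : 'rV[R]_n) : R :=
  Num.sqrt (\sum_(i < n) u 0 i ^+ 2).

(** Lebesgue integral over R^n, written as the iterated one-dimensional
    Lebesgue integral (equal to the n-dimensional Lebesgue integral by
    Fubini--Tonelli for nonnegative measurable / integrable integrands). *)
Fixpoint rint (n : nat) : ('rV[R]_n -> \bar R) -> \bar R :=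
  match n return ('rV[R]_n -> \bar R) -> \bar R with
  | 0 => fun F => F 0
  | n'.+1 => fun F =>
      (\int[@lebesgue_measure R]_(t in setT)
         rint (fun v : 'rV[R]_n' => F (row_mx (\row_(_ < 1) t) v)))%E
  end.

Definition ball_vol (n : nat) : R :=
  fine (rint (fun u : 'rV[R]_n => if (enorm u <= 1)%R then 1%E else 0%E)).

(** Integral against the normalized surface measure of S^{n-1} in R^n,
    via polar coordinates:  int_S F dsigma = |B|^{-1} int_B F(u/|u|) du. *)
Definition sphere_avg (n : nat) (F : 'rV[R]_n -> \bar R) : \bar R :=
  (((ball_vol n)^-1)%:E *
   rint (fun u : 'rV[R]_n =>
          if (enorm u <= 1)%R then F ((enorm u)^-1 *: u) else 0))%E.

Definition sph_avg (d : nat) (t : R) (f g : 'rV[R]_d -> R) (x : 'rV[R]_d)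
  : \bar R :=
  sphere_avg (fun w : 'rV[R]_(d + d) =>
     (f (x - t *: lsubmx w) * g (x - t *: rsubmx w))%:E).

Definition box (d : nat) (a : 'rV[R]_d) (l : R) : set 'rV[R]_d :=
  [set x | forall i, a 0 i <= x 0 i < a 0 i + l].

(** A cube of a dyadic lattice: lower corner and exponent m (side 2^m). *)
Definition dcube (d : nat) := ('rV[R]_d * int)%type.
Definition side (d : nat) (Q : dcube d) : R := (2 : R) ^ Q.2.
Definition cset (d : nat) (Q : dcube d) : set 'rV[R]_d := box Q.1 (side Q).

Definition dyadic_lattice (d : nat) (D : set (dcube d)) : Prop :=
  (forall (m : int) (x : 'rV[R]_d),
     exists! Q, D Q /\ Q.2 = m /\ cset Q x) /\
  (forall Q, D Q ->
     exists s : seq (dcube d),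
       [/\ size s = (2 ^ d)%N, uniq s,
           (forall Q', Q' \in s -> D Q' /\ Q'.2 = Q.2 - 1) &
           cset Q = \bigcup_(Q' in [set Q' | Q' \in s]) cset Q']).

Definition third (d : nat) (Q : dcube d) : set 'rV[R]_d :=
  box (Q.1 + (side Q / 3) *: const_mx 1) (side Q / 3).

(** The subcube (1/3 Q)(k) of the 3 x ... x 3 grid of Q, indexed by its
    relative position k : 'I_d -> 'I_3. *)
Definition third_sub (d : nat) (Q : dcube d) (k : {ffun 'I_d -> 'I_3})
  : set 'rV[R]_d :=
  box (Q.1 + (side Q / 3) *: \row_i ((k i : nat)%:R)) (side Q / 3).

Definition restr (d : nat) (f : 'rV[R]_d -> R) (A : set 'rV[R]_d)
  : 'rV[R]_d -> R := fun x => if `[< A x >] then f x else 0.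

Definition maxop (d : nat) (Q : dcube d) (k : {ffun 'I_d -> 'I_3})
  (f g : 'rV[R]_d -> R) (x : 'rV[R]_d) : \bar R :=
  ereal_sup [set sph_avg t (restr f (third Q)) (restr g (third_sub Q k)) x
            | t in `[(2 : R) ^ (Q.2 - 4), (2 : R) ^ (Q.2 - 3)]].

Definition pairing (d : nat) (F : 'rV[R]_d -> \bar R) (h : 'rV[R]_d -> R)
  : \bar R := rint (fun x => (F x * (h x)%:E)%E).

End Defs.

From HB Require Import structures.
From mathcomp Require Import all_boot all_order all_algebra.
From mathcomp Require Import all_classical all_reals all_analysis.
From mathcomp Require Import lra.
Import Order.TTheory GRing.Theory Num.Theory.
Local Open Scope classical_set_scope.
Local Open Scope ring_scope.

(** If [x], [x - t y] and [x - t z] all lie in a cube of side [s] and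
    [|y|^2 + |z|^2 = 1], then coordinatewise [|t y_i|, |t z_i| < s], so
    [t^2 <= 2 d s^2]. Hence once the dilation range [[2^(m-4), 2^(m-3)]] of
    [Q'] exceeds [sqrt(2d) side(Qt)], the integrand of every spherical average
    of [f chi] and [g chi] at a point [x] of [Qt] vanishes, except at the
    null point [u = 0] of the polar-coordinate parametrisation, where the
    normalisation [u / |u|] is a junk value. So the maximal function vanishes
    on the support of [h]. *)

Section SphericalAverageVanishing.
Local Set Implicit Arguments.
Variable R : realType.

Lemma rint0 n : rint (fun _ : 'rV[R]_n => 0%E) = 0%E.
Proof. by elim: n => [//|n IH] /=; rewrite IH integral0. Qed.

Lemma integral_eq0_off_point (a : R) (phi : R -> \bar R) :
  (forall t, t != a -> phi t = 0%E) ->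
  (\int[@lebesgue_measure R]_(t in setT) phi t = 0)%E.
Proof.
move=> phi0; have -> : phi = phi \_ [set a].
  apply/funext => t; rewrite patchE; case: ifPn => // /negP; rewrite inE.
  by move=> /eqP; exact: phi0.
by rewrite -integral_mkcondr; apply: integral_Sset1; exact: subIsetr.
Qed.

Lemma rint_eq0_off0 n (G : 'rV[R]_n -> \bar R) : (0 < n)%N ->
  (forall u, u != 0 -> G u = 0%E) -> rint G = 0%E.
Proof.
case: n G => // n G _ G0 /=; apply: (@integral_eq0_off_point 0) => t t0.
rewrite -(rint0 n); congr rint; apply: funext => v; apply: G0.
apply: contra t0 => /eqP.
move/(congr1 (fun M : 'rV[R]_(1 + n) => M 0 (lshift n ord0))).
by rewrite /= row_mxEl !mxE => ->.
Qed.

Lemma sumsq_scale_invnorm n (u : 'rV[R]_n) : u != 0 ->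
  \sum_i ((enorm u)^-1 *: u) 0 i ^+ 2 = 1.
Proof.
move=> u0; have sumsq_ge0 : 0 <= \sum_i u 0 i ^+ 2.
  by apply: sumr_ge0 => i _; exact: sqr_ge0.
have sumsq_neq0 : \sum_i u 0 i ^+ 2 != 0.
  apply: contra u0 => /eqP/psumr_eq0P sumsq0; apply/eqP/rowP => i.
  by apply/eqP; rewrite mxE -sqrf_eq0 sumsq0 // => j _; exact: sqr_ge0.
under eq_bigr do rewrite mxE exprMn.
by rewrite -mulr_sumr exprVn /enorm sqr_sqrtr ?mulVf.
Qed.

Lemma sqr_le_of_interval (a s p q : R) :
  a <= p < a + s -> a <= p - q < a + s -> q ^+ 2 <= s ^+ 2.
Proof. by move=> /andP[? ?] /andP[? ?]; nra. Qed.

Lemma sqr_le_of_box_dilates d (a x : 'rV[R]_d) (s t : R) (w : 'rV[R]_(d + d)) :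
  \sum_i w 0 i ^+ 2 = 1 -> box a s x ->
  box a s (x - t *: lsubmx w) -> box a s (x - t *: rsubmx w) ->
  t ^+ 2 <= s ^+ 2 *+ (d + d).
Proof.
move=> w1 xin yin zin.
rewrite -[t ^+ 2]mulr1 -w1 mulr_sumr big_split_ord /= mulrnDr.
have -> : s ^+ 2 *+ d = \sum_(i < d) s ^+ 2 by rewrite sumr_const card_ord.
apply: lerD; apply: ler_sum => i _; rewrite -exprMn.
- by have := yin i; rewrite !mxE; exact: sqr_le_of_interval (xin i).
- by have := zin i; rewrite !mxE; exact: sqr_le_of_interval (xin i).
Qed.

Lemma sph_avg_eq0 d (f g : 'rV[R]_d -> R) (a x : 'rV[R]_d) (s t : R) :
  (0 < d)%N -> (forall y, ~ box a s y -> f y = 0) ->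
  (forall y, ~ box a s y -> g y = 0) ->
  box a s x -> s ^+ 2 *+ (d + d) < t ^+ 2 -> sph_avg t f g x = 0%E.
Proof.
move=> d_gt0 f0 g0 xin st.
rewrite /sph_avg /sphere_avg rint_eq0_off0 ?mule0 ?addn_gt0 ?d_gt0 // => u u0.
case: ifP => // _; congr (_%:E).
set y := x - _; set z := x - _.
have [yin|/f0->] := pselect (box a s y); last by rewrite mul0r.
have [zin|/g0->] := pselect (box a s z); last by rewrite mulr0.
have := sqr_le_of_box_dilates (sumsq_scale_invnorm u u0) xin yin zin.
by rewrite leNgt st.
Qed.

Lemma restr_eq0 d (f : 'rV[R]_d -> R) (A : set 'rV[R]_d) y :
  f y = 0 -> restr f A y = 0.
Proof. by rewrite /restr => ->; case: ifP. Qed.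

Lemma maxop_eq0 d (Q : dcube R d) (k : {ffun 'I_d -> 'I_3})
    (f g : 'rV[R]_d -> R) (a x : 'rV[R]_d) (s : R) :
  (0 < d)%N -> (forall y, ~ box a s y -> f y = 0) ->
  (forall y, ~ box a s y -> g y = 0) -> box a s x ->
  s ^+ 2 *+ (d + d) < ((2 : R) ^ (Q.2 - 4)) ^+ 2 -> maxop Q k f g x = 0%E.
Proof.
move=> d_gt0 f0 g0 xin s_small.
have lo_gt0 : 0 < (2 : R) ^ (Q.2 - 4) by exact: exprz_gt0.
have lo_le_hi : (2 : R) ^ (Q.2 - 4) <= 2 ^ (Q.2 - 3) by rewrite ler_eXz2l //; lra.
have lo_in : (2 : R) ^ (Q.2 - 4) \in `[(2 : R) ^ (Q.2 - 4), 2 ^ (Q.2 - 3)].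
  by rewrite in_itv /= lexx lo_le_hi.
have avg0 t : t \in `[(2 : R) ^ (Q.2 - 4), 2 ^ (Q.2 - 3)] ->
    sph_avg t (restr f (third Q)) (restr g (third_sub Q k)) x = 0%E.
  rewrite in_itv /= => /andP[lo_le_t _].
  apply: sph_avg_eq0 xin _ => // [y /f0|y /g0|]; try exact: restr_eq0.
  by apply: (lt_le_trans s_small); rewrite lerXn2r ?nnegrE //; lra.
rewrite /maxop [X in ereal_sup X](_ : _ = [set 0%E]) ?ereal_sup1 //.
apply/seteqP; split => [_ [t tin <-]|_ ->]; first by rewrite /= avg0 ?inE.
exists (2 ^ (Q.2 - 4)); first exact: lo_in.
exact: avg0 lo_in.
Qed.

Lemma pairing_eq0 d (F : 'rV[R]_d -> \bar R) (h : 'rV[R]_d -> R) :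
  (forall x, h x != 0 -> F x = 0%E) -> pairing F h = 0%E.
Proof.
move=> F0; rewrite /pairing -(rint0 d); congr rint; apply: funext => x.
by have [->|/F0->] := eqVneq (h x) 0; rewrite ?mule0 ?mul0e.
Qed.

Lemma dcube_exp_le d (Q Q' : dcube R d) : (0 < d)%N ->
  cset Q `<=` cset Q' -> Q.2 <= Q'.2.
Proof.
move=> d_gt0 QQ'; pose i0 : 'I_d := Ordinal d_gt0.
have [sQ_gt0 sQ'_gt0] : 0 < side Q /\ 0 < side Q' by split; exact: exprz_gt0.
have corner_in : cset Q Q.1 by move=> i; rewrite lexx /= ltrDl.
have /andP[corner_lo _] := QQ' _ corner_in i0.
suff : side Q <= side Q' by rewrite /side ler_eXz2l //; lra.
rewrite leNgt; apply/negP => sQ'_lt_sQ.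
pose c := (side Q + side Q') / 2.
have mid_in : cset Q (Q.1 + c *: const_mx 1).
  by move=> i; rewrite !mxE mulr1 lerDl ltrD2l /c; apply/andP; split; lra.
by have /andP[_] := QQ' _ mid_in i0; rewrite !mxE mulr1 /c; lra.
Qed.

End SphericalAverageVanishing.

Theorem lemma4p1 (R : realType) (d : nat) (hd : (0 < d)%N)
  (D : set (dcube R d)) (hD : dyadic_lattice D)
  (k : {ffun 'I_d -> 'I_3})
  (f g h : 'rV[R]_d -> R) (Qt : dcube R d) (hQt : D Qt)
  (bf : exists M : R, forall x, `|f x| <= M)
  (bg : exists M : R, forall x, `|g x| <= M)
  (bh : exists M : R, forall x, `|h x| <= M)
  (sf : forall x, ~ cset Qt x -> f x = 0)
  (sg : forall x, ~ cset Qt x -> g x = 0)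
  (sh : forall x, ~ cset Qt x -> h x = 0) :
  exists N : int, forall Q0 : dcube R d,
    D Q0 -> cset Qt `<=` cset Q0 -> N <= Q0.2 ->
    forall Q' : dcube R d, D Q' -> cset Q0 `<=` cset Q' ->
      pairing (maxop Q' k f g) h = 0%E.
Proof.
pose c := side Qt ^+ 2 *+ (d + d).
have c_ge0 : 0 <= c by rewrite mulrn_wge0 // sqr_ge0.
have [n c_le_2n] : exists n : nat, c + 1 <= 2 ^+ n.
  exists (Num.Def.archi_bound (c + 1)).
  apply/ltW/(lt_le_trans (archi_boundP _)); first lra.
  by rewrite -natrX ler_nat ltnW // ltn_expl.
exists (n%:Z + 4) => Q0 _ _ NQ0 Q' _ Q0Q'.
have n_le : n%:Z <= Q'.2 - 4 by have := dcube_exp_le hd Q0Q'; lra.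
have lo_ge : c + 1 <= (2 : R) ^ (Q'.2 - 4).
  by apply: (le_trans c_le_2n); rewrite -[2 ^+ n]/(2 ^ n%:Z) ler_eXz2l //; lra.
apply: pairing_eq0 => x hx0.
have [xin|/sh hx] := pselect (cset Qt x); last by rewrite hx eqxx in hx0.
apply: maxop_eq0 xin _ => //; rewrite -/c; nra.
Qed.
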